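(* Let $(\mathcal{X},d)$ be a finite metric space, $\mu\in\mathcal{M}_+(\mathcal{X})$, $t>0$, $s\in(0,1]$, and let $\hat\mu_{t,s}$ be the Poisson-model estimator. Then for every $p\ge1$ and $C>0$, $$\mathbb{E}\big[\mathrm{KR}^p_{p,C}(\hat\mu_{t,s},\mu)\big]\le\frac{C^p}{2}\Big(2(1-s)\mathbb{M}(\mu)+\frac{s}{\sqrt t}\sum_{x\in\mathcal{X}}\sqrt{\mu(x)}\Big).$$
   Context: $\mathcal{M}_+(\mathcal{X})$ is the set of non-negative measures on the finite set $\mathcal{X}$, $\mathbb{M}(\mu)=\sum_x\mu(x)$. For $\mu,\nu\in\mathcal{M}_+(\mathcal{X})$, $\Pi_\le(\mu,\nu)$ is the set of $\pi\in\mathcal{M}_+(\mathcal{X}\times\mathcal{X})$ with $\sum_{x'}\pi(x,x')\le\mu(x)$ and $\sum_x\pi(x,x')\le\nu(x')$ for all $x,x'$, and the $(p,C)$-Kantorovich–Rubinstein distance is $\mathrm{KR}_{p,C}(\mu,\nu)=\big(\min_{\pi\in\Pi_\le(\mu,\nu)}\sum_{x,x'}d^p(x,x')\pi(x,x')+C^p(\frac{\mathbb{M}(\mu)+\mathbb{M}(\nu)}{2}-\mathbb{M}(\pi))\big)^{1/p}$. Poisson model: let $(P_x)_{x\in\mathcal{X}}$ be independent with $P_x\sim\mathrm{Poi}(t\mu(x))$ and, independently, $(B_x)_{x\in\mathcal{X}}$ independent with $B_x\sim\mathrm{Ber}(s)$; the estimator is $\hat\mu_{t,s}=\frac{1}{st}\sum_{x\in\mathcal{X}}B_xP_x\delta_x$.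 *)

From HB Require Import structures.
From mathcomp Require Import all_boot all_order all_algebra.
From mathcomp Require Import all_classical all_reals all_analysis.
Set Implicit Arguments. Unset Strict Implicit. Unset Printing Implicit Defensive.
Import Order.TTheory GRing.Theory Num.Theory.
Local Open Scope ring_scope.
Local Open Scope classical_set_scope.

Section Defs.
Variables (R : realType) (X : finType).

Definition is_metric (d : X -> X -> R) : Prop :=
  [/\ forall x y, 0 <= d x y,
      forall x y, d x y = 0 <-> x = y,
      forall x y, d x y = d y x &
      forall x y z, d x z <= d x y + d y z].

Definition nonneg_measure (mu : X -> R) : Prop := forall x, 0 <= mu x.

Definition mass (mu : X -> R) : R := \sum_(x : X) mu x.

Definition subcoupling (mu nu : X -> R) (pi : {ffun X * X -> R}) : Prop :=
  [/\ forall z, 0 <= pi z,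
      forall x, \sum_(x' : X) pi (x, x') <= mu x &
      forall x', \sum_(x : X) pi (x, x') <= nu x'].

Definition KR_cost (d : X -> X -> R) (p C : R) (mu nu : X -> R)
    (pi : {ffun X * X -> R}) : R :=
  \sum_(z : X * X) (d z.1 z.2 `^ p) * pi z
  + C `^ p * ((mass mu + mass nu) / 2 - \sum_(z : X * X) pi z).

(* KR_{p,C}(mu,nu) = (min_{pi in Pi_<=} cost)^(1/p); the minimum is attained
   (continuous function on a nonempty compact polytope), so it equals the inf. *)
Definition KR (d : X -> X -> R) (p C : R) (mu nu : X -> R) : R :=
  (inf [set KR_cost d p C mu nu pi | pi in subcoupling mu nu]) `^ p^-1.

(* Outcomes of the Poisson model: omega x = (B_x, P_x). *)
Definition outcome := {ffun X -> bool * nat}.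

Definition bernoulli_pmf (s : R) (b : bool) : R := if b then s else 1 - s.
Definition poisson_pmf (lam : R) (n : nat) : R :=
  expR (- lam) * lam ^+ n / (n`!)%:R.

Definition poisson_model_prob (t s : R) (mu : X -> R) (om : outcome) : R :=
  \prod_(x : X) (bernoulli_pmf s (om x).1 * poisson_pmf (t * mu x) (om x).2).

Definition estimator (t s : R) (om : outcome) : X -> R :=
  fun x => ((om x).1%:R * (om x).2%:R) / (s * t).

Definition pm_expectation (t s : R) (mu : X -> R) (f : outcome -> R) : \bar R :=
  \esum_(om in [set: outcome]) (poisson_model_prob t s mu om * f om)%:E.

End Defs.

(* Bounding KR^p by the cost of the diagonal subcoupling [min (nu x) (mu x)]
   gives [KR^p (nu, mu) <= C^p / 2 * sum_x |nu x - mu x|], so it suffices to bound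
   E |hat mu (x) - mu x| coordinatewise; by independence only the coordinate x
   matters.  With hat mu (x) = B N / (s t) and N ~ Poi (t mu x), the event B = 0
   contributes (1 - s) mu x, while on B = 1 the triangle inequality gives
   s |N / (s t) - mu x| <= ((1 - s) N + s |N - t mu x|) / t, whose mean is at
   most (1 - s) mu x + s sqrt (mu x / t) since E |N - lam| <= sqrt (Var N) = sqrt lam.
   The expectation is a countable sum, controlled by its truncations to the
   finite boxes {0..N}^X, on which each Poisson series is bounded by its sum. *)

From Pilot Require Import Defs.
From mathcomp Require Import all_boot all_order all_algebra.
From mathcomp Require Import all_classical all_reals all_analysis.
From mathcomp Require Import lra zify ring.
Set Implicit Arguments.
Unset Strict Implicit.
Unset Printing Implicit Defensive.
Import Order.TTheory GRing.Theory Num.Theory.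
Local Open Scope ring_scope.

Section poisson_moments.
Variables (R : realType) (lam : R).

Lemma poisson_pmfE n : Defs.poisson_pmf lam n = expR (- lam) * exp_coeff lam n.
Proof. by rewrite /Defs.poisson_pmf /exp_coeff /= mulrA. Qed.

Lemma exp_coeffS n : lam * exp_coeff lam n = n.+1%:R * exp_coeff lam n.+1.
Proof.
rewrite /exp_coeff /= factS natrM exprS.
have fact_neq0 : (n`!)%:R != 0 :> R by rewrite pnatr_eq0 -lt0n fact_gt0.
by field; rewrite fact_neq0 /= addrC natr1 pnatr_eq0.
Qed.

Lemma sum_natr_exp_coeff N :
  \sum_(n < N.+1) n%:R * exp_coeff lam n = lam * \sum_(n < N) exp_coeff lam n.
Proof.
elim: N => [|N IH]; first by rewrite big_ord_recr !big_ord0 /= !mul0r mulr0 add0r.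
by rewrite big_ord_recr /= IH [in RHS]big_ord_recr /= mulrDr exp_coeffS.
Qed.

(* The correction term is nonnegative once [lam <= M + 1], which is how
   truncated second moments are bounded below. *)
Lemma sum_exp_coeff_sqr_dev M :
  \sum_(n < M.+1) exp_coeff lam n * (n%:R - lam) ^+ 2
  = lam * \sum_(n < M.+1) exp_coeff lam n - lam * exp_coeff lam M * (M.+1%:R - lam).
Proof.
elim: M => [|M IH].
  by rewrite !big_ord_recr !big_ord0 /= /exp_coeff /= expr0 divr1 !add0r; ring.
rewrite big_ord_recr /= IH [in RHS]big_ord_recr /= exp_coeffS.
by rewrite -[M.+2]addn1 -[M.+1]addn1 !natrD; ring.
Qed.

Lemma sum_poisson_pmfE (N : nat) (F : nat -> R) :
  \sum_(n < N) Defs.poisson_pmf lam n * F n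
  = (\sum_(n < N) exp_coeff lam n * F n) / expR lam.
Proof.
under eq_bigr do rewrite poisson_pmfE -mulrA.
by rewrite -mulr_sumr expRN mulrC.
Qed.

Hypothesis lam_ge0 : 0 <= lam.

Lemma poisson_pmf_ge0 n : 0 <= Defs.poisson_pmf lam n.
Proof. by rewrite poisson_pmfE mulr_ge0 ?expR_ge0 ?exp_coeff_ge0. Qed.

Lemma sum_exp_coeff_le_expR N : \sum_(n < N) exp_coeff lam n <= expR lam.
Proof.
rewrite -(big_mkord xpredT (exp_coeff lam)) -/(series (exp_coeff lam) N).
apply: nondecreasing_cvgn_le; last exact: is_cvg_series_exp_coeff.
apply/nondecreasing_seqP => n; rewrite /series /= big_nat_recr //= lerDl.
exact: exp_coeff_ge0.
Qed.

Lemma sum_poisson_pmf_le1 N : \sum_(n < N) Defs.poisson_pmf lam n <= 1.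
Proof.
under eq_bigr do rewrite poisson_pmfE.
by rewrite -mulr_sumr expRN mulrC ler_pdivrMr ?expR_gt0 // mul1r sum_exp_coeff_le_expR.
Qed.

Lemma poisson_mean_le N : \sum_(n < N) Defs.poisson_pmf lam n * n%:R <= lam.
Proof.
rewrite sum_poisson_pmfE ler_pdivrMr ?expR_gt0 //.
under eq_bigr do rewrite mulrC.
apply: (@le_trans _ _ (\sum_(n < N.+1) n%:R * exp_coeff lam n)).
  by rewrite [leRHS]big_ord_recr /= lerDl mulr_ge0 ?exp_coeff_ge0.
by rewrite sum_natr_exp_coeff ler_wpM2l ?sum_exp_coeff_le_expR.
Qed.

Lemma poisson_sqr_dev_le N :
  \sum_(n < N) Defs.poisson_pmf lam n * (n%:R - lam) ^+ 2 <= lam.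
Proof.
rewrite (sum_poisson_pmfE N (fun n => (n%:R - lam) ^+ 2)) ler_pdivrMr ?expR_gt0 //.
set F := fun n : nat => exp_coeff lam n * (n%:R - lam) ^+ 2.
have F_ge0 n : 0 <= F n by rewrite mulr_ge0 ?exp_coeff_ge0 ?sqr_ge0.
pose M := (N + Num.Def.archi_bound lam)%N.
have le_N_M : (N <= M.+1)%N by rewrite /M; lia.
have le_lam_M : lam <= M.+1%:R.
  by apply: (le_trans (ltW (archi_boundP lam_ge0))); rewrite ler_nat /M; lia.
apply: (@le_trans _ _ (\sum_(n < M.+1) F n)).
  rewrite (big_ord_widen M.+1 F le_N_M) [leRHS](bigID (fun n : 'I_ _ => (n < N)%N)) /=.
  by rewrite lerDl sumr_ge0.
rewrite sum_exp_coeff_sqr_dev lerBlDr -[leLHS]addr0 lerD //.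
  by rewrite ler_wpM2l ?sum_exp_coeff_le_expR.
by apply: mulr_ge0; [rewrite mulr_ge0 ?exp_coeff_ge0 | rewrite subr_ge0].
Qed.

Lemma poisson_abs_dev_le N :
  \sum_(n < N) Defs.poisson_pmf lam n * `|n%:R - lam| <= Num.sqrt lam.
Proof.
have [-> | lam_neq0] := eqVneq lam 0.
  rewrite sqrtr0 big1 // => -[[|n] _] /=; first by rewrite subr0 normr0 mulr0.
  by rewrite /Defs.poisson_pmf expr0n /= mulr0 !mul0r.
set c := Num.sqrt lam.
have c_gt0 : 0 < c by rewrite sqrtr_gt0 lt_def lam_neq0.
have c_sqr : c ^+ 2 = lam by rewrite sqr_sqrtr.
(* AM-GM: [2 c |x| <= x^2 + c^2], so the mean deviation is at most
   [(Var + lam) / (2 c) <= 2 lam / (2 c) = c]. *)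
have amgm (x : R) : `|x| <= (x ^+ 2 + lam) / (2 * c).
  rewrite ler_pdivlMr ?mulr_gt0 // -c_sqr -real_normK ?num_real //.
  by have := sqr_ge0 (`|x| - c); rewrite sqrrB; lra.
apply: (@le_trans _ _ (\sum_(n < N)
    (Defs.poisson_pmf lam n * (n%:R - lam) ^+ 2 + lam * Defs.poisson_pmf lam n) / (2 * c))).
  apply: ler_sum => n _.
  rewrite [leRHS](_ : _ = Defs.poisson_pmf lam n * (((n%:R - lam) ^+ 2 + lam) / (2 * c))).
    by rewrite ler_wpM2l ?poisson_pmf_ge0 ?amgm.
  by ring.
rewrite -mulr_suml big_split /= -mulr_sumr ler_pdivrMr ?mulr_gt0 //.
have := poisson_sqr_dev_le N; have := sum_poisson_pmf_le1 N.
have : c * (2 * c) = 2 * lam by rewrite -c_sqr expr2; ring.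
nra.
Qed.
End poisson_moments.

Section estimator_coordinate.
Variables (R : realType) (s t : R).
Hypotheses (s_gt0 : 0 < s) (s_le1 : s <= 1) (t_gt0 : 0 < t).

Lemma bernoulli_pmf_ge0 b : 0 <= Defs.bernoulli_pmf s b.
Proof. by case: b; rewrite /Defs.bernoulli_pmf ?subr_ge0 // ltW. Qed.

Lemma sum_bernoulli_poisson_le1 (lam : R) N : 0 <= lam ->
  \sum_(a : bool * 'I_N) Defs.bernoulli_pmf s a.1 * Defs.poisson_pmf lam a.2 <= 1.
Proof.
move=> lam_ge0; rewrite -(pair_big xpredT xpredT (fun b (n : 'I_N) =>
  Defs.bernoulli_pmf s b * Defs.poisson_pmf lam n)) /=.
rewrite big_bool /= -!mulr_sumr -mulrDl /Defs.bernoulli_pmf addrC subrK mul1r.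
exact: sum_poisson_pmf_le1.
Qed.

Lemma scaled_estimator_dev_le (x m : R) : 0 <= x ->
  s * `|x / (s * t) - m| <= ((1 - s) * x + s * `|x - t * m|) / t.
Proof.
move=> x_ge0.
have split_dev : s * (x / (s * t) - m) = ((1 - s) * x + s * (x - t * m)) / t.
  by field; rewrite !gt_eqF.
rewrite -[s in s * `|_|]gtr0_norm // -normrM split_dev normrM normfV (gtr0_norm t_gt0).
rewrite ler_pM2r ?invr_gt0 //; apply: (le_trans (ler_normD _ _)).
by rewrite !normrM ger0_norm ?subr_ge0 // [`|x|]ger0_norm // gtr0_norm.
Qed.

Lemma sum_bernoulli_poisson_dev_le (m : R) N : 0 <= m ->
  \sum_(a : bool * 'I_N) Defs.bernoulli_pmf s a.1 * Defs.poisson_pmf (t * m) a.2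
     * `|a.1%:R * a.2%:R / (s * t) - m|
  <= 2 * (1 - s) * m + s / Num.sqrt t * Num.sqrt m.
Proof.
move=> m_ge0; have tm_ge0 : 0 <= t * m by rewrite mulr_ge0 // ltW.
set P := Defs.poisson_pmf (t * m).
have P_ge0 n : 0 <= P n := poisson_pmf_ge0 tm_ge0 n.
rewrite -(pair_big xpredT xpredT (fun b (n : 'I_N) =>
  Defs.bernoulli_pmf s b * P n * `|b%:R * n%:R / (s * t) - m|)) /= big_bool /=.
rewrite /Defs.bernoulli_pmf.
have B_false : \sum_(n < N) (1 - s) * P n * `|0%:R * n%:R / (s * t) - m| <= (1 - s) * m.
  under eq_bigr do rewrite !mul0r sub0r normrN ger0_norm // mulrAC.
  rewrite -mulr_sumr ler_piMr ?mulr_ge0 ?subr_ge0 //.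
  exact: sum_poisson_pmf_le1.
have sqrt_tm : Num.sqrt (t * m) / t = Num.sqrt m / Num.sqrt t.
  have sqrt_t_gt0 : 0 < Num.sqrt t by rewrite sqrtr_gt0.
  rewrite sqrtrM ?ltW // -{2}(sqr_sqrtr (ltW t_gt0)) expr2.
  by field; rewrite gt_eqF.
have B_true : \sum_(n < N) s * P n * `|1%:R * n%:R / (s * t) - m|
    <= (1 - s) * m + s * (Num.sqrt m / Num.sqrt t).
  apply: (@le_trans _ _ (\sum_(n < N)
      ((1 - s) * (P n * n%:R) + s * (P n * `|n%:R - t * m|)) / t)).
    apply: ler_sum => n _; rewrite mul1r mulrAC mulrC.
    rewrite [leRHS](_ : _ = P n * (((1 - s) * n%:R + s * `|n%:R - t * m|) / t));
      last by ring.
    by rewrite ler_wpM2l ?scaled_estimator_dev_le.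
  rewrite -mulr_suml big_split /= -!mulr_sumr -sqrt_tm.
  rewrite [leRHS](_ : _ = ((1 - s) * (t * m) + s * Num.sqrt (t * m)) / t); last first.
    by field; rewrite gt_eqF.
  rewrite ler_pM2r ?invr_gt0 //; apply: lerD; apply: ler_wpM2l.
  - by rewrite subr_ge0.
  - exact: poisson_mean_le.
  - exact: ltW.
  - exact: poisson_abs_dev_le.
rewrite [s / _ * _]mulrAC -[s * _ / _]mulrA.
lra.
Qed.
End estimator_coordinate.

Section KR_bound.
Variables (R : realType) (X : finType).
Local Open Scope classical_set_scope.

Lemma sum_pair_ffun (pi : {ffun X * X -> R}) :
  \sum_(z : X * X) pi z = \sum_(x : X) \sum_(x' : X) pi (x, x').
Proof. by rewrite pair_big /=; apply: eq_bigr => -[]. Qed.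

Variables (d : X -> X -> R) (p C : R) (nu mu : X -> R).

Lemma KR_cost_ge0 (pi : {ffun X * X -> R}) :
  subcoupling nu mu pi -> 0 <= KR_cost d p C nu mu pi.
Proof.
move=> [pi_ge0 row_le col_le]; rewrite /KR_cost.
apply: addr_ge0; first by apply: sumr_ge0 => z _; rewrite mulr_ge0 ?powR_ge0.
rewrite mulr_ge0 ?powR_ge0 // subr_ge0.
have le_nu : \sum_(z : X * X) pi z <= mass nu.
  by rewrite sum_pair_ffun; apply: ler_sum => x _; exact: row_le.
have le_mu : \sum_(z : X * X) pi z <= mass mu.
  by rewrite sum_pair_ffun exchange_big; apply: ler_sum => x _; exact: col_le.
lra.
Qed.

Lemma KR_powR_le_cost (pi : {ffun X * X -> R}) : p != 0 ->
  subcoupling nu mu pi -> KR d p C nu mu `^ p <= KR_cost d p C nu mu pi.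
Proof.
move=> p_neq0 pi_sub.
set S := [set KR_cost d p C nu mu pi | pi in subcoupling nu mu].
have S_ge0 : lbound S 0 by move=> _ [pi' pi'_sub <-]; exact: KR_cost_ge0.
have inf_ge0 : 0 <= inf S by apply: lb_le_inf => //; exists (KR_cost d p C nu mu pi), pi.
rewrite /KR -powRrM mulVf // powRr1 //.
by apply: ge_inf; [exists 0 | exists pi].
Qed.

Definition diag_coupling : {ffun X * X -> R} :=
  [ffun z => if z.1 == z.2 then Num.min (nu z.1) (mu z.1) else 0].

Lemma diag_coupling_row x : \sum_(x' : X) diag_coupling (x, x') = Num.min (nu x) (mu x).
Proof.
rewrite (bigD1 x) //= big1 ?addr0 ?ffunE ?eqxx // => x' x'_neq.
by rewrite ffunE /= eq_sym (negbTE x'_neq).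
Qed.

Lemma diag_coupling_col x' : \sum_(x : X) diag_coupling (x, x') = Num.min (nu x') (mu x').
Proof.
rewrite (bigD1 x') //= big1 ?addr0 ?ffunE ?eqxx // => x x_neq.
by rewrite ffunE /= (negbTE x_neq).
Qed.

Lemma diag_coupling_subcoupling :
  nonneg_measure nu -> nonneg_measure mu -> subcoupling nu mu diag_coupling.
Proof.
move=> nu_ge0 mu_ge0; split.
- by move=> z; rewrite ffunE; case: ifP; rewrite // le_min nu_ge0 mu_ge0.
- by move=> x; rewrite diag_coupling_row ge_min lexx.
- by move=> x'; rewrite diag_coupling_col ge_min lexx orbT.
Qed.

Lemma KR_cost_diag_coupling : (forall x, d x x = 0) -> p != 0 ->
  KR_cost d p C nu mu diag_coupling = C `^ p / 2 * \sum_(x : X) `|nu x - mu x|.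
Proof.
move=> d_xx p_neq0; rewrite /KR_cost big1 ?add0r; last first.
  move=> [x x'] _; rewrite ffunE /=.
  by case: eqP => [<-|_]; rewrite ?d_xx ?powR0 ?mul0r ?mulr0.
rewrite sum_pair_ffun (eq_bigr _ (fun x _ => diag_coupling_row x)) /mass.
rewrite -mulrA; congr (_ * _).
rewrite -big_split /= mulr_suml -sumrB mulr_sumr; apply: eq_bigr => x _.
by rewrite minr_absE; field.
Qed.

Lemma KR_powR_le_sum_dev : (forall x, d x x = 0) -> p != 0 ->
  nonneg_measure nu -> nonneg_measure mu ->
  KR d p C nu mu `^ p <= C `^ p / 2 * \sum_(x : X) `|nu x - mu x|.
Proof.
move=> d_xx p_neq0 nu_ge0 mu_ge0; rewrite -KR_cost_diag_coupling //.
exact/KR_powR_le_cost/diag_coupling_subcoupling.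
Qed.
End KR_bound.

Lemma sum_ffun_prod_weight_le (R : realType) (I A : finType)
    (w : I -> A -> R) (h : A -> R) (i0 : I) :
  (forall i a, 0 <= w i a) -> (forall i, \sum_a w i a <= 1) -> (forall a, 0 <= h a) ->
  \sum_(c : {ffun I -> A}) (\prod_i w i (c i)) * h (c i0) <= \sum_a w i0 a * h a.
Proof.
move=> w_ge0 w_sum_le1 h_ge0.
pose F i a := w i a * (if i == i0 then h a else 1).
have prodF (c : {ffun I -> A}) : \prod_i F i (c i) = (\prod_i w i (c i)) * h (c i0).
  rewrite big_split /= [X in _ * X](bigD1 i0) //= eqxx.
  by rewrite [X in h _ * X]big1 ?mulr1 // => i /negbTE ->.
rewrite (eq_bigr _ (fun c _ => esym (prodF c))) -bigA_distr_bigA /= (bigD1 i0) //=.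
have sumF_i0 : \sum_a F i0 a = \sum_a w i0 a * h a.
  by apply: eq_bigr => a _; rewrite /F eqxx.
rewrite sumF_i0 ler_piMr ?sumr_ge0 // => [a _|]; first exact: mulr_ge0.
apply: prodr_ile1 => i /negbTE i_neq.
have -> : \sum_a F i a = \sum_a w i a by apply: eq_bigr => a _; rewrite /F i_neq mulr1.
by rewrite sumr_ge0 ?w_sum_le1.
Qed.

Section truncation.
Variables (R : realType) (X : finType).
Local Open Scope classical_set_scope.

Definition box_outcome {N} (c : {ffun X -> bool * 'I_N}) : outcome X :=
  [ffun x => ((c x).1, nat_of_ord (c x).2)].

(* Every finite set of outcomes lies in some box [{ffun X -> bool * 'I_N.+1}]. *)
Lemma esum_le_box_sums (g : outcome X -> R) (B : R) :
  (forall om, 0 <= g om) ->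
  (forall N, \sum_(c : {ffun X -> bool * 'I_N.+1}) g (box_outcome c) <= B) ->
  (\esum_(om in [set: outcome X]) (g om)%:E <= B%:E)%E.
Proof.
move=> g_ge0 box_le; apply/ereal_supP => _ [A [finA _] <-].
rewrite fsbig_finite //= sumEFin lee_fin.
set r := finmap.enum_fset _; have r_uniq : uniq r := finmap.fset_uniq _.
pose N := \max_(om <- r) \max_(x : X) (om x).2.
have r_bounded om x : om \in r -> ((om x).2 <= N)%N.
  move=> om_r; apply: leq_trans (leq_bigmax_seq _ om_r isT).
  exact: (@leq_bigmax X (fun x => (om x).2) x).
pose trunc (om : outcome X) : {ffun X -> bool * 'I_N.+1} :=
  [ffun x => ((om x).1, inord (om x).2)].
have truncK om : om \in r -> box_outcome (trunc om) = om.
  move=> om_r; apply/ffunP => x; rewrite !ffunE /= inordK ?ltnS ?r_bounded //.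
  by case: (om x).
rewrite (eq_big_seq (fun om => g (box_outcome (trunc om)))); last first.
  by move=> om om_r; rewrite truncK.
rewrite -(big_map trunc xpredT (fun c => g (box_outcome c))) big_uniq; last first.
  rewrite map_inj_in_uniq // => om om' om_r om'_r eq_trunc.
  by rewrite -(truncK om om_r) -(truncK om' om'_r) eq_trunc.
apply: le_trans (box_le N).
by rewrite [leRHS](bigID (mem (map trunc r))) /= lerDl sumr_ge0.
Qed.
End truncation.
Arguments box_outcome {X N}.

Theorem lemma2p4 (R : realType) (X : finType) (d : X -> X -> R)
  (mu : X -> R) (t s p C : R) :
  is_metric d -> nonneg_measure mu ->
  0 < t -> 0 < s -> s <= 1 -> 1 <= p -> 0 < C ->
  (pm_expectation t s mu (fun om => (KR d p C (estimator t s om) mu `^ p)%R)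
   <= ((C `^ p / 2) * (2 * (1 - s) * mass mu
        + s / Num.sqrt t * \sum_(x : X) Num.sqrt (mu x)))%:E)%E.
Proof.
move=> [_ d_eq0 _ _] mu_ge0 t_gt0 s_gt0 s_le1 p_ge1 C_gt0.
have p_neq0 : p != 0 by rewrite gt_eqF // (lt_le_trans ltr01).
have Cp_ge0 : 0 <= C `^ p / 2 by rewrite divr_ge0 ?powR_ge0.
have tmu_ge0 x : 0 <= t * mu x by rewrite mulr_ge0 // ltW.
pose w x b n := Defs.bernoulli_pmf s b * Defs.poisson_pmf (t * mu x) n.
have w_ge0 x b n : 0 <= w x b n by rewrite mulr_ge0 ?bernoulli_pmf_ge0 ?poisson_pmf_ge0.
have prob_ge0 om : 0 <= poisson_model_prob t s mu om.
  by apply: prodr_ge0 => x _; exact: w_ge0.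
pose dev om := \sum_(x : X) `|estimator t s om x - mu x|.
apply: (@le_trans _ _ (\esum_(om in [set: outcome X])
    (poisson_model_prob t s mu om * (C `^ p / 2 * dev om))%:E)).
  apply: le_esum => om _; rewrite lee_fin ler_wpM2l // KR_powR_le_sum_dev //.
    by move=> x; apply/d_eq0.
  by move=> x; rewrite divr_ge0 ?mulr_ge0 // ltW.
apply: esum_le_box_sums => [om | N]; first by rewrite mulr_ge0 // mulr_ge0 // sumr_ge0.
have box_term (c : {ffun X -> bool * 'I_N.+1}) :
    poisson_model_prob t s mu (box_outcome c) * (C `^ p / 2 * dev (box_outcome c))
    = C `^ p / 2 * \sum_y (\prod_x w x (c x).1 (c x).2)
                           * `|(c y).1%:R * (c y).2%:R / (s * t) - mu y|.
  rewrite mulrCA; congr (_ * _); rewrite mulr_sumr; apply: eq_bigr => y _.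
  by rewrite /estimator /poisson_model_prob !ffunE; under eq_bigr do rewrite ffunE.
rewrite (eq_bigr _ (fun c _ => box_term c)) -mulr_sumr exchange_big ler_wpM2l //.
rewrite /mass mulr_sumr mulr_sumr -big_split /=; apply: ler_sum => y _.
apply: le_trans _ (sum_bernoulli_poisson_dev_le s_gt0 s_le1 t_gt0 N.+1 (mu_ge0 y)).
apply: (sum_ffun_prod_weight_le (w := fun x (a : bool * 'I_N.+1) => w x a.1 a.2)
  (h := fun a => `|a.1%:R * a.2%:R / (s * t) - mu y|) y) => //.
by move=> x; apply: sum_bernoulli_poisson_le1.
Qed.
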